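(* For every $u\in K$, $$\overline V=W:=\{v\in X:\ (Bv)(x)\ge0 \text{ for all } x\in\omega_c\},$$ where the closure of $V$ is taken in $X$.
   Context: Fix $T>1$. $X=H^1_0(0,T)$, $U=\{1+v:v\in X\}$, $(Bw)(x)=\int_x^{x+1}w$ for $x\in[0,T-1]$, $K=\{u\in U: Bu\ge0 \text{ on }[0,T-1]\}$, $\omega_c=\{x\in[0,T-1]:(Bu)(x)=0\}$. For fixed $u$, $V=\{v\in X:\ \exists(\varepsilon_n)\subset(0,\infty),\ \varepsilon_n\to0,\ B(u+\varepsilon_nv)\ge0 \text{ on }[0,T-1]\ \forall n\}$. *)

From HB Require Import structures.
From mathcomp Require Import all_boot all_order all_algebra.
From mathcomp Require Import all_classical all_reals all_analysis.
Set Implicit Arguments. Unset Strict Implicit. Unset Printing Implicit Defensive.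
Import Order.TTheory GRing.Theory Num.Theory.
Import numFieldNormedType.Exports.
Local Open Scope classical_set_scope.
Local Open Scope ring_scope.

Section Defs.
Variable R : realType.
Local Notation mu := (@lebesgue_measure R).

Definition cc (a b : R) : set R := [set x | a <= x <= b].

(* g is an L^2(0,T) weak derivative of v on [0,T]:
   g measurable and square-integrable on [0,T], and v(x) = v(0) + int_0^x g. *)
Definition is_wderiv (T : R) (v g : R -> R) : Prop :=
  measurable_fun (cc 0 T) g /\
  (\int[mu]_(t in (cc 0 T)) ((g t) ^+ 2)%:E < +oo)%E /\
  (forall x, 0 <= x <= T -> v x = v 0 + Rintegral mu (cc 0 x) g).

(* X = H^1_0(0,T): functions on [0,T] with an L^2 weak derivative,
   vanishing at 0 and T (absolutely continuous representative). *)
Definition H10 (T : R) (v : R -> R) : Prop :=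
  (exists g, is_wderiv T v g) /\ v 0 = 0 /\ v T = 0.

Definition Bop (w : R -> R) (x : R) : R := Rintegral mu (cc x (x + 1)) w.

Definition shift1 (v : R -> R) : R -> R := fun x => 1 + v x.

(* K: u = 1 + v0 with v0 in X and B u >= 0 on [0, T-1] *)
Definition inK (T : R) (v0 : R -> R) : Prop :=
  H10 T v0 /\ forall x, 0 <= x <= T - 1 -> 0 <= Bop (shift1 v0) x.

Definition omega_c (T : R) (u : R -> R) : set R :=
  [set x | 0 <= x <= T - 1 /\ Bop u x = 0].

Definition Vset (T : R) (u : R -> R) : set (R -> R) :=
  [set v | H10 T v /\ exists eps : nat -> R,
      (forall n, 0 < eps n) /\ eps @ \oo --> (0 : R) /\
      forall n x, 0 <= x <= T - 1 ->
        0 <= Bop (fun y => u y + eps n * v y) x].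

Definition Wset (T : R) (u : R -> R) : set (R -> R) :=
  [set v | H10 T v /\ forall x, omega_c T u x -> 0 <= Bop v x].

(* closure in X w.r.t. the H^1(0,T) norm
   ||z||^2 = int_0^T z^2 + int_0^T (z')^2 *)
Definition H1closure (T : R) (A : set (R -> R)) : set (R -> R) :=
  [set v | H10 T v /\ forall e : R, 0 < e ->
     exists w, A w /\ exists g, is_wderiv T (fun x => v x - w x) g /\
       (\int[mu]_(t in (cc 0 T)) ((v t - w t) ^+ 2)%:E
        + \int[mu]_(t in (cc 0 T)) ((g t) ^+ 2)%:E < (e ^+ 2)%:E)%E].

End Defs.

From HB Require Import structures.
From mathcomp Require Import all_boot all_order all_algebra.
From mathcomp Require Import all_classical all_reals all_analysis.
From mathcomp Require Import ring lra.
Import Order.TTheory GRing.Theory Num.Theory.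
Import numFieldNormedType.Exports.

Local Open Scope classical_set_scope.
Local Open Scope ring_scope.

(** If [v] is in the closure of [V], approximate it by [w] in [V]; [B w >= 0]
    on the contact set, and since [B] is an average over an interval of length
    one, [|B (v - w)| <= ||v - w||], so [B v >= 0] there.  Conversely, for [v]
    in [W] and [d > 0] small, [w := v - d v0 = v + d - d u] is close to [v] and
    [B w = B v + d - d B u] is positive on the contact set.  A compactness
    argument on [[0, T - 1]] then gives [B u + eps B w >= 0] for all small
    [eps], i.e. [w] is in [V]. *)

Section Preliminaries.
Context {R : realType}.
Local Notation mu := (@lebesgue_measure R).

Lemma ccE (a b : R) : cc a b = `[a, b]%classic.
Proof. by apply/seteqP; split => x /=; rewrite in_itv. Qed.

Lemma measurable_cc (a b : R) : measurable (cc a b).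
Proof. by rewrite ccE. Qed.

Lemma subset_cc {a b c d : R} : a <= c -> d <= b -> cc c d `<=` cc a b.
Proof. by move=> ac db x /= /andP[xc xd]; apply/andP; split; lra. Qed.

Lemma lebesgue_measure_cc {a b : R} : a <= b -> mu (cc a b) = (b - a)%:E.
Proof.
by move=> ab; rewrite ccE lebesgue_measure_itv/= lte_fin; case: ltgtP ab => //= ->; rewrite subrr.
Qed.

Lemma lebesgue_measure_cc_lty (a b : R) : (mu (cc a b) < +oo)%E.
Proof.
case: (lerP a b) => ab; first by rewrite lebesgue_measure_cc // ltry.
rewrite (_ : cc a b = set0) ?measure0 //.
by apply/seteqP; split => x //= /andP[xa xb]; lra.
Qed.

Lemma within_continuousD {A : set R} {f g : R -> R} :
  {within A, continuous f} -> {within A, continuous g} ->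
  {within A, continuous (fun x => f x + g x)}.
Proof. by move=> cf cg x; apply: cvgD; [exact: cf | exact: cg]. Qed.

Lemma within_continuousM {A : set R} {f g : R -> R} :
  {within A, continuous f} -> {within A, continuous g} ->
  {within A, continuous (fun x => f x * g x)}.
Proof. by move=> cf cg x; apply: cvgM; [exact: cf | exact: cg]. Qed.

Lemma within_continuous_cst {A : set R} (c : R) :
  {within A, continuous (fun _ : R => c)}.
Proof. by apply: continuous_subspaceT => x; exact: cvg_cst. Qed.

Lemma within_continuous_lincomb {A : set R} {f h : R -> R} (a b : R) :
  {within A, continuous f} -> {within A, continuous h} ->
  {within A, continuous (fun x => a * f x + b * h x)}.
Proof.
move=> cf ch.
by apply: within_continuousD; apply: within_continuousM => //; exact: within_continuous_cst.
Qed.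

Lemma within_continuous_sqr {A : set R} {f : R -> R} :
  {within A, continuous f} -> {within A, continuous (fun x => f x ^+ 2)}.
Proof.
move=> cf; rewrite (_ : (fun x => _) = (fun x => f x * f x)); last first.
  by apply/funext => x; rewrite expr2.
exact: within_continuousM.
Qed.

Lemma within_continuous_shift1 {A : set R} {v : R -> R} :
  {within A, continuous v} -> {within A, continuous (shift1 v)}.
Proof. exact: within_continuousD (within_continuous_cst 1). Qed.

Lemma integrable_itv_continuous {a b : R} {f : R -> R} :
  {within `[a, b], continuous f} -> mu.-integrable `[a, b] (EFin \o f).
Proof. by move=> cf; apply: continuous_compact_integrable => //; exact: segment_compact. Qed.

Lemma integrable_cc_continuous {a b c d : R} {f : R -> R} :
  {within `[a, b], continuous f} -> a <= c -> d <= b ->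
  mu.-integrable (cc c d) (EFin \o f).
Proof.
move=> cf ac db; apply: (@integrableS _ _ _ mu `[a, b]%classic) => //.
- exact: measurable_cc.
- by rewrite -ccE; exact: subset_cc.
- exact: integrable_itv_continuous.
Qed.

Lemma integrable_cst_lty {D : set R} (r : R) : measurable D -> (mu D < +oo)%E ->
  mu.-integrable D (EFin \o cst r).
Proof.
move=> mD Dfin; apply/integrableP; split; first exact/measurable_realfun.measurable_EFinP.
rewrite (_ : (fun x => _) = cst `|r|%:E); last by apply/funext.
by rewrite integral_cst // lte_mul_pinfty.
Qed.

Lemma integrableZl_EFin {D : set R} {f : R -> R} (k : R) : measurable D ->
  mu.-integrable D (EFin \o f) -> mu.-integrable D (EFin \o (fun t => k * f t)).
Proof.
move=> mD intf; have := integrableZl (mu:=mu) mD k intf.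
by apply: eq_integrable => // x _ /=; rewrite EFinM.
Qed.

Lemma integrableD_EFin {D : set R} {f h : R -> R} : measurable D ->
  mu.-integrable D (EFin \o f) -> mu.-integrable D (EFin \o h) ->
  mu.-integrable D (EFin \o (fun t => f t + h t)).
Proof.
move=> mD intf inth; have := integrableD (mu:=mu) mD intf inth.
by apply: eq_integrable => // x _ /=; rewrite EFinD.
Qed.

Lemma Rintegral_lincomb {D : set R} {f h : R -> R} (a b : R) : measurable D ->
  mu.-integrable D (EFin \o f) -> mu.-integrable D (EFin \o h) ->
  \int[mu]_(t in D) (a * f t + b * h t) =
    a * \int[mu]_(t in D) f t + b * \int[mu]_(t in D) h t.
Proof.
move=> mD intf inth.
by rewrite RintegralD ?RintegralZl //; exact: integrableZl_EFin.
Qed.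

Definition square_integrable (D : set R) (g : R -> R) : Prop :=
  measurable_fun D g /\ (\int[mu]_(t in D) ((g t) ^+ 2)%:E < +oo)%E.

Lemma square_integrableP {D : set R} (g : R -> R) : measurable D ->
  square_integrable D g <->
  measurable_fun D g /\ mu.-integrable D (EFin \o (fun t => g t ^+ 2)).
Proof.
move=> mD; split => [[mg fin]|[mg /integrableP[_ fin]]]; split => //.
- apply/integrableP; split.
    by apply/measurable_realfun.measurable_EFinP; exact: measurable_realfun.measurable_funX.
  by under eq_integral do rewrite /= ger0_norm ?sqr_ge0//.
- by move: fin; under eq_integral do rewrite /= ger0_norm ?sqr_ge0//.
Qed.

Lemma square_integrable_integrable {D : set R} {g : R -> R} :
  measurable D -> (mu D < +oo)%E ->
  square_integrable D g -> mu.-integrable D (EFin \o g).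
Proof.
move=> mD Dfin /(square_integrableP g mD)[mg ig2].
apply: (@le_integrable _ _ _ mu D mD _ (EFin \o (fun t => 1 + g t ^+ 2))) => //.
- exact/measurable_realfun.measurable_EFinP.
- move=> x _ /=; rewrite lee_fin.
  have g2 : 0 <= 1 + g x ^+ 2 by rewrite addr_ge0 ?sqr_ge0.
  by rewrite (ger0_norm g2) ler_norml; apply/andP; split; nra.
- by apply: integrableD_EFin => //; exact: integrable_cst_lty.
Qed.

Lemma square_integrable_lincomb {D : set R} {f h : R -> R} (a b : R) :
  measurable D -> square_integrable D f -> square_integrable D h ->
  square_integrable D (fun t => a * f t + b * h t).
Proof.
move=> mD /(square_integrableP f mD)[mf if2] /(square_integrableP h mD)[mh ih2].
apply/(square_integrableP _ mD); split.
  by apply: measurable_realfun.measurable_funD;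
    apply: measurable_realfun.measurable_funM => //; exact: measurable_cst.
apply: (@le_integrable _ _ _ mu D mD _
   (EFin \o (fun t => 2 * a ^+ 2 * f t ^+ 2 + 2 * b ^+ 2 * h t ^+ 2))) => //.
- apply/measurable_realfun.measurable_EFinP; apply: measurable_realfun.measurable_funX.
  by apply: measurable_realfun.measurable_funD;
    apply: measurable_realfun.measurable_funM => //; exact: measurable_cst.
- move=> x _ /=; rewrite lee_fin.
  have bound0 : 0 <= 2 * a ^+ 2 * f x ^+ 2 + 2 * b ^+ 2 * h x ^+ 2.
    by apply: addr_ge0; apply: mulr_ge0; rewrite ?sqr_ge0 // mulr_ge0 ?sqr_ge0.
  rewrite (ger0_norm (sqr_ge0 _)) (ger0_norm bound0).
  by have := sqr_ge0 (a * f x - b * h x); nra.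
- by apply: integrableD_EFin => //; apply: integrableZl_EFin.
Qed.

Lemma wderiv_integrable {T : R} {z g : R -> R} :
  is_wderiv T z g -> mu.-integrable (cc 0 T) (EFin \o g).
Proof.
move=> [mg [fin _]]; apply: square_integrable_integrable => //.
- exact: measurable_cc.
- exact: lebesgue_measure_cc_lty.
Qed.

Lemma wderiv_continuous {T : R} {z g : R -> R} : 0 <= T ->
  is_wderiv T z g -> {within `[0, T], continuous z}.
Proof.
move=> T0 hw; have ig := wderiv_integrable hw; rewrite ccE in ig.
have := within_continuousD (within_continuous_cst (A:=`[0, T]) (z 0))
  (parameterized_integral_continuous T0 ig).
apply: subspace_eq_continuous => x; rewrite inE /= in_itv /= => x0T.
by case: hw => _ [_ hz]; rewrite /from_subspace /= (hz x x0T) /parameterized_integral ccE.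
Qed.

Lemma wderiv_lincomb {T : R} {f gf h gh : R -> R} (a b : R) : 0 <= T ->
  is_wderiv T f gf -> is_wderiv T h gh ->
  is_wderiv T (fun x => a * f x + b * h x) (fun t => a * gf t + b * gh t).
Proof.
move=> T0 hf hh.
have igf := wderiv_integrable hf; have igh := wderiv_integrable hh.
case: hf => mgf [fgf ef]; case: hh => mgh [fgh eh].
have [mg fg] := square_integrable_lincomb a b (measurable_cc 0 T)
  (conj mgf fgf) (conj mgh fgh).
split => //; split => // x x0T.
have sub : cc 0 x `<=` cc 0 T by apply: subset_cc => //; case/andP: x0T.
have restr k : mu.-integrable (cc 0 T) (EFin \o k) -> mu.-integrable (cc 0 x) (EFin \o k).
  exact: (@integrableS _ _ _ mu _ _ _ (measurable_cc 0 T) (measurable_cc 0 x) sub).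
rewrite Rintegral_lincomb ?restr //; last exact: measurable_cc.
by rewrite (ef x x0T) (eh x x0T); ring.
Qed.

Lemma H10_continuous {T : R} {v : R -> R} : 0 <= T -> H10 T v ->
  {within `[0, T], continuous v}.
Proof. by move=> T0 [[g hg] _]; exact: wderiv_continuous hg. Qed.

Lemma H10_lincomb {T : R} {f h : R -> R} (a b : R) : 0 <= T ->
  H10 T f -> H10 T h -> H10 T (fun x => a * f x + b * h x).
Proof.
move=> T0 [[gf hgf] [f0 fT]] [[gh hgh] [h0 hT]]; split.
  by exists (fun t => a * gf t + b * gh t); exact: wderiv_lincomb.
by rewrite f0 fT h0 hT !mulr0 addr0.
Qed.


Lemma wderivZ {T : R} {z g : R -> R} (d : R) : 0 <= T -> is_wderiv T z g ->
  is_wderiv T (fun x => d * z x) (fun t => d * g t).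
Proof.
move=> T0 hw; have := wderiv_lincomb d 0 T0 hw hw.
have drop0 (f : R -> R) : (fun x => d * f x + 0 * f x) = (fun x => d * f x).
  by apply/funext => x; rewrite mul0r addr0.
by rewrite !drop0.
Qed.

Lemma H1_small_multiple {T : R} {z g : R -> R} {e : R} : 0 <= T ->
  is_wderiv T z g -> 0 < e ->
  exists2 d : R, 0 < d &
    (\int[mu]_(t in cc 0 T) ((d * z t) ^+ 2)%:E
     + \int[mu]_(t in cc 0 T) ((d * g t) ^+ 2)%:E < (e ^+ 2)%:E)%E.
Proof.
move=> T0 hw e0.
have iz : mu.-integrable (cc 0 T) (EFin \o (fun t => z t ^+ 2)).
  by rewrite ccE; apply/integrable_itv_continuous/within_continuous_sqr/(wderiv_continuous T0 hw).
have ig : mu.-integrable (cc 0 T) (EFin \o (fun t => g t ^+ 2)).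
  by case: hw => mg [fg _]; exact: ((square_integrableP g (measurable_cc 0 T)).1 (conj mg fg)).2.
have fz := @integrable_fin_num _ _ _ mu _ (measurable_cc 0 T) _ iz.
have fg := @integrable_fin_num _ _ _ mu _ (measurable_cc 0 T) _ ig.
set S := fine (\int[mu]_(t in cc 0 T) (z t ^+ 2)%:E) + fine (\int[mu]_(t in cc 0 T) (g t ^+ 2)%:E).
have S0 : 0 <= S.
  by rewrite addr_ge0 // fine_ge0 // integral_ge0 // => t _; rewrite lee_fin sqr_ge0.
exists (e / (S + 1)); first by rewrite divr_gt0 // ltr_wpDl.
under eq_integral do rewrite exprMn EFinM.
under [X in (_ + X)%E]eq_integral do rewrite exprMn EFinM.
rewrite !integralZl //; try exact: measurable_cc.
rewrite -(fineK fz) -(fineK fg) -!EFinM -EFinD lte_fin -mulrDr -/S.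
rewrite expr_div_n mulrAC ltr_pdivrMr ?exprn_gt0 ?ltr_wpDl //.
have : 0 < e ^+ 2 by rewrite exprn_gt0.
nra.
Qed.

Lemma Bop_lincomb {T : R} {f h : R -> R} (a b : R) {x : R} : 0 <= x <= T - 1 ->
  {within `[0, T], continuous f} -> {within `[0, T], continuous h} ->
  Bop (fun y => a * f y + b * h y) x = a * Bop f x + b * Bop h x.
Proof.
move=> /andP[x0 xT] cf ch; have xT' : x + 1 <= T by lra.
by apply: Rintegral_lincomb; [exact: measurable_cc |
  exact: integrable_cc_continuous cf x0 xT' | exact: integrable_cc_continuous ch x0 xT'].
Qed.

Lemma Bop_cst (c x : R) : Bop (fun _ => c) x = c.
Proof.
have mu1 : mu (cc x (x + 1)) = 1%:E.
  by rewrite lebesgue_measure_cc ?lerDl // addrAC subrr add0r.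
rewrite /Bop Rintegral_cst; last exact: measurable_cc.
have -> : fine (mu (cc x (x + 1))) = 1 by rewrite mu1.
by rewrite mulr1.
Qed.

Lemma Bop_shift1 {T : R} {v : R -> R} {x : R} : 0 <= x <= T - 1 ->
  {within `[0, T], continuous v} -> Bop (shift1 v) x = 1 + Bop v x.
Proof.
move=> x0T cv.
have -> : shift1 v = (fun y => 1 * (fun _ => 1) y + 1 * v y).
  by apply/funext => y; rewrite /shift1 !mul1r.
by rewrite (Bop_lincomb _ _ x0T (within_continuous_cst 1) cv) Bop_cst !mul1r.
Qed.

(* [B f] is a difference of two values of a primitive of [f] extended by zero
   outside [[0, T]]; extending to [[-1, T + 1]] makes that primitive
   continuous at both endpoints [y] and [y + 1]. *)
Lemma Bop_continuous {T : R} {f : R -> R} : 1 <= T ->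
  {within `[0, T], continuous f} -> {within `[0, T - 1], continuous (Bop f)}.
Proof.
move=> T1 cf.
pose ft := f \_ `[0, T].
have ift : mu.-integrable `[-1, T + 1] (EFin \o ft).
  have : mu.-integrable setT ((EFin \o f) \_ `[0, T]).
    apply/(@integrable_mkcond _ _ _ mu _ (EFin \o f) (measurable_itv `[0, T])).1.
    exact: integrable_itv_continuous.
  by rewrite restrict_EFin; apply: integrableS.
have T1' : -1 < T + 1 by lra.
pose G y := parameterized_integral mu (-1) y ft.
have cG y : -1 < y < T + 1 -> {for y, continuous G}.
  move=> y_in; apply: (within_continuous_continuous T1').
    exact: parameterized_integral_continuous (ltW T1') ift.
  by rewrite in_itv.
have cH : {within `[0, T - 1], continuous (fun y => G (y + 1) - G y)}.
  apply: continuous_in_subspaceT => y; rewrite inE /= in_itv /= => /andP[y0 yT].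
  have cG1 : {for y, continuous (G \o (fun t => t + 1))}.
    apply: continuous_comp; first by apply: cvgD; [exact: cvg_id | exact: cvg_cst].
    by apply: cG; apply/andP; split; lra.
  by apply: cvgB cG1 _; apply: cG; apply/andP; split; lra.
apply: (subspace_eq_continuous _ cH) => y; rewrite inE /= in_itv /= => /andP[y0 yT].
rewrite /from_subspace /G /parameterized_integral /=.
have i1 : mu.-integrable `[-1, y + 1] (EFin \o ft).
  by apply: (integrableS _ _ _ ift) => //; apply: subset_itvl; rewrite bnd_simp; lra.
rewrite Rintegral_itvB //; [|by rewrite bnd_simp; lra|by rewrite bnd_simp; lra].
rewrite Rintegral_itv_obnd_cbnd; last first.
  by apply: (integrableS _ _ _ i1) => //; apply: subset_itvr; rewrite bnd_simp; lra.
rewrite /Bop ccE; apply: eq_Rintegral => t; rewrite inE /= in_itv /= => /andP[t1 t2].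
by rewrite /ft patchE ifT // inE /= in_itv /=; apply/andP; split; lra.
Qed.

Lemma Bop_le_integral {T : R} {f : R -> R} {x : R} : 0 <= x <= T - 1 ->
  {within `[0, T], continuous f} -> (forall y, 0 <= f y) ->
  Bop f x <= fine (\int[mu]_(t in cc 0 T) (f t)%:E).
Proof.
move=> /andP[x0 xT] cf f0; have xT' : x + 1 <= T by lra.
have ifT : mu.-integrable (cc 0 T) (EFin \o f) by exact: integrable_cc_continuous cf _ _.
have ifx := integrable_cc_continuous cf x0 xT'.
rewrite /Bop /Rintegral fine_le //; [exact: (@integrable_fin_num _ _ _ mu _ (measurable_cc _ _) _ ifx)|
  exact: (@integrable_fin_num _ _ _ mu _ (measurable_cc _ _) _ ifT)|].
apply: ge0_subset_integral; [exact: measurable_cc|exact: measurable_cc| | |].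
- exact: measurable_int ifT.
- by move=> y _; rewrite lee_fin.
- exact: subset_cc.
Qed.

Lemma Bop_ge_of_H1_lt {T : R} {z g : R -> R} {x e : R} : 1 <= T ->
  0 <= x <= T - 1 -> 0 < e -> is_wderiv T z g ->
  (\int[mu]_(t in cc 0 T) ((z t) ^+ 2)%:E + \int[mu]_(t in cc 0 T) ((g t) ^+ 2)%:E
     < (e ^+ 2)%:E)%E ->
  - e <= Bop z x.
Proof.
move=> T1 x0T e0 hw hI.
have cz := wderiv_continuous (le_trans ler01 T1) hw.
have czz := within_continuous_sqr cz.
(* AM-GM: [z >= - e / 2 - z ^ 2 / (2 e)], with the gap [(z + e) ^ 2 / (2 e)]. *)
have amgm : Bop (fun y => (- (e / 2)) * (fun _ => 1) y + (- (2 * e)^-1) * z y ^+ 2) x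
    <= Bop z x.
  case/andP: x0T => x0 xT; have xT' : x + 1 <= T by lra.
  apply: le_Rintegral; [exact: measurable_cc| |exact: integrable_cc_continuous cz x0 xT'|].
    exact: integrable_cc_continuous (within_continuous_lincomb _ _ (within_continuous_cst 1) czz) x0 xT'.
  move=> y _ /=; have e2 : 0 < 2 * e by rewrite mulr_gt0.
  have -> : - (e / 2) * 1 + - (2 * e)^-1 * z y ^+ 2 = z y - (z y + e) ^+ 2 / (2 * e).
    by field; rewrite gt_eqF.
  by rewrite lerBlDr lerDl divr_ge0 ?sqr_ge0 ?ltW.
rewrite (Bop_lincomb _ _ x0T (within_continuous_cst 1) czz) Bop_cst in amgm.
have z2 : fine (\int[mu]_(t in cc 0 T) (z t ^+ 2)%:E) < e ^+ 2.
  have iz2 := integrable_cc_continuous czz (lexx 0) (lexx T).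
  rewrite -lte_fin fineK; last exact: (@integrable_fin_num _ _ _ mu _ (measurable_cc _ _) _ iz2).
  by apply: le_lt_trans hI; apply: leeDl; apply: integral_ge0 => y _; rewrite lee_fin sqr_ge0.
have hle := Bop_le_integral x0T czz (fun y => sqr_ge0 (z y)).
have half : (2 * e)^-1 * Bop (fun y => z y ^+ 2) x <= e / 2.
  have -> : e / 2 = (2 * e)^-1 * e ^+ 2 by field; rewrite gt_eqF.
  by rewrite ler_pM2l ?invr_gt0 ?mulr_gt0 //; lra.
lra.
Qed.

(* [p + max 0 q] is positive, hence bounded below by some [c > 0] on the
   segment; where [q < 0] this forces [p >= c], which beats [eps q]. *)
Lemma nonneg_perturbation_itv {a b : R} {p q : R -> R} : a <= b ->
  {within `[a, b], continuous p} -> {within `[a, b], continuous q} ->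
  (forall x, x \in `[a, b] -> 0 <= p x) ->
  (forall x, x \in `[a, b] -> p x = 0 -> 0 < q x) ->
  exists2 eps0 : R, 0 < eps0 &
    forall eps x, 0 <= eps <= eps0 -> x \in `[a, b] -> 0 <= p x + eps * q x.
Proof.
move=> ab cp cq p0 q0.
have cpq : {within `[a, b], continuous (fun x => p x + ((fun _ => 0) \max q) x)}.
  apply: within_continuousD => // x.
  by apply: continuous_max; [exact: (within_continuous_cst 0 x) | exact: cq].
have [x1 x1ab minpq] := EVT_min ab cpq.
have [x2 x2ab minq] := EVT_min ab cq.
set c := p x1 + _ in minpq; set m := `|q x2| + 1.
have c0 : 0 < c.
  rewrite /c /=; have [px1|] := ltrP 0 (p x1).
    by apply: (lt_le_trans px1); rewrite lerDl le_max lexx.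
  move=> px1; have {}px1 : p x1 = 0 by apply/eqP; rewrite eq_le px1 p0.
  by rewrite px1 add0r (lt_le_trans (q0 _ x1ab px1)) // le_max lexx orbT.
have m0 : 0 < m by rewrite ltr_wpDl.
exists (c / m) => [|eps x /andP[eps0 epsc] xab]; first by rewrite divr_gt0.
have [qx0|qx0] := lerP 0 (q x); first by rewrite addr_ge0 ?p0 ?mulr_ge0.
have cpx : c <= p x by have := minpq x xab; rewrite /= (max_idPl (ltW qx0)) addr0.
have qm : - m <= q x.
  by have := minq x xab; have := ler_norm (- q x2); rewrite normrN /m; lra.
have epsm : eps * m <= c by rewrite -(ler_pdivlMr _ _ m0).
nra.
Qed.

Lemma Vset_of_nonneg_perturbation {T : R} {u w : R -> R} {eps0 : R} :
  H10 T w -> 0 < eps0 ->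
  (forall eps x, 0 <= eps <= eps0 -> 0 <= x <= T - 1 ->
     0 <= Bop (fun y => u y + eps * w y) x) ->
  Vset T u w.
Proof.
move=> hw eps00 hB; split => //; exists (fun n => eps0 * harmonic n).
split; [|split].
- by move=> n; rewrite mulr_gt0 // harmonic_gt0.
- by rewrite -(mulr0 eps0); apply: cvgM; [exact: cvg_cst | exact: cvg_harmonic].
- move=> n x x0T; apply: hB x0T; apply/andP; split.
    by apply: mulr_ge0; [exact: ltW | exact/ltW/harmonic_gt0].
  by rewrite ger_pMr // /harmonic /= invf_le1 ?ler1n.
Qed.

End Preliminaries.

Section ContactSet.
Context {R : realType} {T : R} {u : R -> R}.
Hypotheses (T1 : 1 <= T) (cu : {within `[0, T], continuous u}).

Let T0 : 0 <= T. Proof. exact: le_trans ler01 T1. Qed.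

Lemma Bop_perturb {w : R -> R} (eps : R) {x : R} : 0 <= x <= T - 1 ->
  {within `[0, T], continuous w} ->
  Bop (fun y => u y + eps * w y) x = Bop u x + eps * Bop w x.
Proof.
move=> x0T cw; rewrite -[in RHS](mul1r (Bop u x)) -(Bop_lincomb _ _ x0T cu cw).
by congr Bop; apply/funext => y; rewrite mul1r.
Qed.

Lemma Vset_sub_Wset : Vset T u `<=` Wset T u.
Proof.
move=> w [hw [eps [eps0 [_ hB]]]]; split => // x [x0T Bux].
have := hB 0%N x x0T; rewrite Bop_perturb ?Bux ?add0r ?pmulr_rge0 //.
exact: H10_continuous T0 hw.
Qed.

Lemma H1closure_Vset_sub_Wset : H1closure T (Vset T u) `<=` Wset T u.
Proof.
move=> v [hv hcl]; split => // x xc; have [x0T _] := xc.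
apply/ler_addgt0Pr => e e0.
have [w [/Vset_sub_Wset[hw Bw] [g [hvw hI]]]] := hcl e e0.
have := Bop_ge_of_H1_lt T1 x0T e0 hvw hI.
have -> : (fun y => v y - w y) = (fun y => 1 * v y + (-1) * w y).
  by apply/funext => y; rewrite mul1r mulN1r.
rewrite (Bop_lincomb _ _ x0T (H10_continuous T0 hv) (H10_continuous T0 hw)).
by have := Bw x xc; lra.
Qed.

End ContactSet.

Section Approximation.
Context {R : realType} {T : R} {v0 : R -> R}.
Hypotheses (T1 : 1 <= T) (hK : inK T v0).

Let T0 : 0 <= T. Proof. exact: le_trans ler01 T1. Qed.

Lemma Wset_sub_H1closure_Vset :
  Wset T (shift1 v0) `<=` H1closure T (Vset T (shift1 v0)).
Proof.
have [hv0 Bu0] := hK; have [[g0 hg0] _] := hv0.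
have cv0 := H10_continuous T0 hv0; have cu := within_continuous_shift1 cv0.
move=> v [hv hW]; split => // e e0.
have cv := H10_continuous T0 hv.
have [d d0 small] := H1_small_multiple T0 hg0 e0.
pose w y := 1 * v y + (- d) * v0 y.
have cw : {within `[0, T], continuous w} := within_continuous_lincomb 1 (- d) cv cv0.
have Bw x : 0 <= x <= T - 1 -> Bop w x = Bop v x + d - d * Bop (shift1 v0) x.
  by move=> x0T; rewrite (Bop_lincomb _ _ x0T cv cv0) (Bop_shift1 x0T cv0); ring.
have vw t : v t - w t = d * v0 t by rewrite /w; ring.
exists w; split.
  have T10 : 0 <= T - 1 by rewrite subr_ge0.
  have [x|x|eps0 eps00 pert] := nonneg_perturbation_itv T10
      (Bop_continuous T1 cu) (Bop_continuous T1 cw).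
  - by rewrite in_itv; exact: Bu0.
  - rewrite in_itv => x0T Bux; rewrite Bw // Bux mulr0 subr0.
    by have := hW x (conj x0T Bux); lra.
  apply: (Vset_of_nonneg_perturbation (H10_lincomb 1 (- d) T0 hv hv0) eps00).
  by move=> eps x epsle x0T; rewrite (Bop_perturb cu) //; apply: pert; rewrite ?in_itv.
exists (fun t => d * g0 t); split.
  by rewrite (_ : (fun x => _) = (fun x => d * v0 x)); [exact: wderivZ | exact/funext].
by under eq_integral do rewrite vw.
Qed.

End Approximation.

Theorem mainTheorem6 (R : realType) (T : R) (hT : 1 < T) (v0 : R -> R)
  (hK : inK T v0) :
  H1closure T (Vset T (shift1 v0)) = Wset T (shift1 v0).
Proof.
have T1 : 1 <= T := ltW hT.
have cu := within_continuous_shift1 (H10_continuous (le_trans ler01 T1) hK.1).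
apply/seteqP; split; first exact: H1closure_Vset_sub_Wset T1 cu.
exact: Wset_sub_H1closure_Vset T1 hK.
Qed.
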